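(* Let $A=(A,d,\Delta)$ be a mixed complex. There is an inclusion $\mathsf{CC}^-(\mathrm{End}_A)\hookrightarrow\mathrm{End}_{\mathsf{CC}^-(A)}$ in $\mathcal Ops^{\mathsf{MxCpx}}$, given in arity $n$ by sending $f\otimes u^r$ to the $k[u]$-multilinear map $a_1u^{i_1}\otimes\cdots\otimes a_nu^{i_n}\mapsto f(a_1,\dots,a_n)u^{r+\sum_j i_j}$.
   Context: Cohomological grading, $|u|=2$. A mixed complex is $(V,d,\Delta)$ with $(V,d)$ a cochain complex and $\Delta$ of degree $-1$, $\Delta^2=0$, $d\Delta+\Delta d=0$. $\mathcal Ops^{\mathsf{MxCpx}}$ denotes operads in mixed complexes. For a mixed complex $A$, $\mathrm{End}_A$ denotes the endomorphism operad of $(A,d)$ regarded as an operad in mixed complexes with operator $\{\Delta,f\}=\Delta\circ_1f-(-1)^{|f|}\sum_i f\circ_i\Delta$. $\mathsf{CC}^-(A):=(A\otimes k[u],d+u\Delta)$, regarded as a mixed complex with the $u$-linear extension of $\Delta$, and $\mathrm{End}_{\mathsf{CC}^-(A)}$ is its endomorphism operad as an operad in mixed complexes in the same way. For an operad in mixed complexes $(\mathcal O,\partial,\Delta)$, $\mathsf{CC}^-(\mathcal O)(n)=(\mathcal O(n)\otimes k[u],\partial+\Delta u,\Delta)$ with compositions $(a u^r)\circ_i(bu^s)=(a\circ_ib)u^{r+s}$. *)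

From HB Require Import structures.
From mathcomp Require Import all_boot all_order all_fingroup all_algebra.
From mathcomp Require Import functions.
Set Implicit Arguments. Unset Strict Implicit. Unset Printing Implicit Defensive.
Import Order.TTheory GRing.Theory Num.Theory.
Local Open Scope ring_scope.

Section Defs.
Variable k : fieldType.

Definition ksgn (z : int) : k := (-1) ^+ (odd `|z|%N).

(* Raw data of a (cohomologically) graded k-module with two operators.
   gdeg m v  <->  v is homogeneous of degree m.  The graded module itself is
   the span of the homogeneous elements inside the ambient module gV. *)
Record gdata : Type := GData {
  gV : lmodType k;
  gdeg : int -> gV -> Prop;
  gd : gV -> gV;
  gD : gV -> gV
}.
Arguments gdeg : clear implicits.
Arguments gd : clear implicits.
Arguments gD : clear implicits.

Definition upd {T : Type} (x : nat -> T) (j : nat) (v : T) : nat -> T :=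
  fun l => if l == j then v else x l.

Definition htup (G : gdata) (n : nat) (ds : nat -> int) (x : nat -> gV G) :=
  forall j, (j < n)%N -> gdeg G (ds j) (x j).
Arguments htup : clear implicits.

Definition is_mixed_complex (A : gdata) : Prop :=
  [/\ (forall m, gdeg A m 0) /\
      (forall m (c : k) x y, gdeg A m x -> gdeg A m y -> gdeg A m (c *: x + y)),
      (* the sum of the homogeneous components is direct *)
      (forall (s : seq int) (x : int -> gV A), uniq s ->
          (forall m, m \in s -> gdeg A m (x m)) ->
          \sum_(m <- s) x m = 0 -> forall m, m \in s -> x m = 0),
      (forall m x, gdeg A m x -> gdeg A (m + 1) (gd A x)) /\
      (forall m x, gdeg A m x -> gdeg A (m - 1) (gD A x)),
      (forall m (c : k) x y, gdeg A m x -> gdeg A m y ->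
          gd A (c *: x + y) = c *: gd A x + gd A y /\
          gD A (c *: x + y) = c *: gD A x + gD A y) &
      (forall m x, gdeg A m x ->
          [/\ gd A (gd A x) = 0, gD A (gD A x) = 0 &
              gd A (gD A x) + gD A (gd A x) = 0])].

(* An n-ary operation, given by its values on homogeneous tuples: F ds x is
   the value on the tuple x (entries x_0..x_(n-1)) of degrees ds. *)
Definition nop (V : lmodType k) := (nat -> int) -> (nat -> V) -> V.

Definition isEnd (G : gdata) (n : nat) (p : int) (F : nop (gV G)) : Prop :=
  [/\ (forall ds ds' x x', (forall j, (j < n)%N -> x j = x' j) ->
          htup G n ds x -> htup G n ds' x' -> F ds x = F ds' x'),
      (forall ds x, htup G n ds x -> gdeg G (\sum_(j < n) ds j + p) (F ds x)) &
      (forall ds x j (c : k) y, (j < n)%N -> htup G n ds x -> gdeg G (ds j) y ->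
          F ds (upd x j (c *: x j + y)) = c *: F ds x + F ds (upd x j y))].

Definition ecomp (V : lmodType k) (i m : nat) (q : int) (f g : nop V) : nop V :=
  fun ds x =>
    ksgn (q * \sum_(j < i) ds j) *:
      f (fun l => if (l < i)%N then ds l
                  else if l == i then \sum_(j < m) ds (i + j)%N + q
                  else ds (l + m - 1)%N)
        (fun l => if (l < i)%N then x l
                  else if l == i then g (fun j => ds (i + j)%N) (fun j => x (i + j)%N)
                  else x (l + m - 1)%N).

Definition eunit (V : lmodType k) : nop V := fun ds x => x 0%N.

Definition permseq {T : Type} (n : nat) (s : 'S_n) (x : nat -> T) : nat -> T :=
  fun l => match insub l with Some l' => x (s l') | None => x l end.

Definition kosz (n : nat) (s : 'S_n) (ds : nat -> int) : k :=
  \prod_(a < n) \prod_(b < n | (a < b)%N && (s^-1%g b < s^-1%g a)%N)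
     ksgn (ds a * ds b).

Definition eact (V : lmodType k) (n : nat) (s : 'S_n) (f : nop V) : nop V :=
  fun ds x => kosz s ds *: f (permseq s ds) (permseq s x).

Definition dEnd (G : gdata) (n : nat) (p : int) (f : nop (gV G)) : nop (gV G) :=
  fun ds x =>
    gd G (f ds x) - ksgn p *: \sum_(i < n)
      ksgn (\sum_(j < i) ds j) *: f (upd ds i (ds i + 1)) (upd x i (gd G (x i))).

Definition DEnd (G : gdata) (n : nat) (p : int) (f : nop (gV G)) : nop (gV G) :=
  fun ds x =>
    gD G (f ds x) - ksgn p *: \sum_(i < n)
      ksgn (\sum_(j < i) ds j) *: f (upd ds i (ds i - 1)) (upd x i (gD G (x i))).

(* CC^-(A) = (A[u], d + u Delta) with the u-linear extension of Delta;
   an element X : nat -> A stands for sum_r X_r u^r; homogeneous elements of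
   degree m are the finitely supported X with X_r of degree m - 2r. *)
Definition CC (A : gdata) : gdata :=
  @GData (nat -> gV A : lmodType k)
    (fun m X => (exists N, forall r, (N <= r)%N -> X r = 0) /\
                forall r : nat, gdeg A (m - 2 * (r : int)) (X r))
    (fun X r => gd A (X r) + (if r is r'.+1 then gD A (X r') else 0))
    (fun X r => gD A (X r)).

Definition ival (n t : nat) (I : {ffun 'I_n -> 'I_t.+1}) (j : nat) : nat :=
  oapp (fun j' : 'I_n => nat_of_ord (I j')) 0%N (insub j).

(* Phi (f u^r): a_1 u^(i_1) ... a_n u^(i_n) |-> f(a_1,..,a_n) u^(r + sum i_j),
   extended k-multilinearly (equivalently k[u]-multilinearly). *)
Definition Phi (A : gdata) (n : nat) (f : nop (gV A)) (r : nat) : nop (gV (CC A)) :=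
  fun DS X t =>
    \sum_(I : {ffun 'I_n -> 'I_t.+1} | (r + \sum_(j < n) (I j : nat))%N == t)
      f (fun j => DS j - 2 * (ival I j : int)) (fun j => X j (ival I j)).

End Defs.
Arguments htup {k}.
Arguments isEnd {k}.
Arguments dEnd {k}.
Arguments DEnd {k}.
Arguments gV {k}.
Arguments gdeg {k}.
Arguments gd {k}.
Arguments gD {k}.

From HB Require Import structures.
From mathcomp Require Import all_boot all_order all_fingroup all_algebra.
From mathcomp Require Import boolp functions zify ring.
Set Implicit Arguments. Unset Strict Implicit. Unset Printing Implicit Defensive.
Import Order.TTheory GRing.Theory Num.Theory.
Local Open Scope ring_scope.

(* Phi (f u^r) evaluated on X_1, ..., X_n has, in u-degree t, the coefficient
   sum_phi f(X_1(phi_1), ..., X_n(phi_n)) over the index functions phi with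
   r + phi_1 + ... + phi_n = t: a finite sum over {ffun 'I_n -> 'I_t.+1}.  Each
   operadic identity then comes down to a bijection between index sets: a
   permutation of the coordinates for the symmetric group action, the splitting of
   an index of length n-1+m into an index of length n and a block of length m for
   partial compositions, and the shift of one coordinate by 1, which moves the
   u Delta part of the differential of CC^-(A) into the coefficient of u^(r+1).
   Koszul signs agree because degrees in CC^-(A) differ from those in A by even
   numbers.  Injectivity follows by evaluating on inputs concentrated in u-degree 0,
   on which Phi (f u^r) is f placed in u-degree r, and by directness of the grading
   of A. *)

Section Upd.
Variable T : Type.
Implicit Types (x : nat -> T) (a b : T).

Lemma upd_eq x j a : upd x j a j = a.
Proof. by rewrite /upd eqxx. Qed.

Lemma upd_neq x j a l : l != j -> upd x j a l = x l.
Proof. by rewrite /upd => /negbTE ->. Qed.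

Lemma upd_upd x j a b : upd (upd x j a) j b = upd x j b.
Proof. by apply/funext => l; rewrite /upd; case: eqP. Qed.

Lemma upd_id x j : upd x j (x j) = x.
Proof. by apply/funext => l; rewrite /upd; case: eqP => // ->. Qed.

End Upd.

(** * Sums over index functions *)

Section IndexSums.
Variable V : zmodType.
Implicit Types (n B : nat) (P : pred (nat -> nat)) (phi psi : nat -> nat).

Lemma ival_ord n B (I : {ffun 'I_n -> 'I_B.+1}) (j : 'I_n) : ival I j = I j.
Proof. by rewrite /ival valK. Qed.

Lemma ival_out n B (I : {ffun 'I_n -> 'I_B.+1}) j : (n <= j)%N -> ival I j = 0%N.
Proof. by move=> nj; rewrite /ival; case: insubP => //= j'; rewrite ltnNge nj. Qed.

Lemma ival_le n B (I : {ffun 'I_n -> 'I_B.+1}) j : (ival I j <= B)%N.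
Proof. by rewrite /ival; case: insubP => //= j' _ _; rewrite -ltnS. Qed.

Lemma leq_idx_sum n phi j : (j < n)%N -> (phi j <= \sum_(l < n) phi l)%N.
Proof. by move=> jn; rewrite (bigD1 (Ordinal jn)) //= leq_addr. Qed.

Definition upow n r phi := (r + \sum_(j < n) phi j)%N.

Definition idxsum n B P (h : (nat -> nat) -> V) : V :=
  \sum_(I : {ffun 'I_n -> 'I_B.+1} | P (ival I)) h (ival I).

Definition in_idxsum n B P phi :=
  [/\ forall j, (n <= j)%N -> phi j = 0%N, forall j, (j < n)%N -> (phi j <= B)%N & P phi].

Definition idx_of n B phi : {ffun 'I_n -> 'I_B.+1} := [ffun j : 'I_n => inord (phi j)].

Lemma idx_ofK n B P phi : in_idxsum n B P phi -> ival (idx_of n B phi) = phi.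
Proof.
move=> [out le _]; apply/funext => j; rewrite /ival.
case: insubP => /= [j' jn <-|]; last by rewrite -leqNgt => /out.
by rewrite ffunE inordK // ltnS le.
Qed.

Lemma ivalK n B (I : {ffun 'I_n -> 'I_B.+1}) : idx_of n B (ival I) = I.
Proof. by apply/ffunP => j; rewrite ffunE ival_ord inord_val. Qed.

Lemma in_idxsum_ival n B P (I : {ffun 'I_n -> 'I_B.+1}) : P (ival I) -> in_idxsum n B P (ival I).
Proof. by split => // j; [apply: ival_out | move=> _; apply: ival_le]. Qed.

Lemma in_idxsum_le n B P phi : in_idxsum n B P phi -> forall j, (phi j <= B)%N.
Proof. by move=> [out le _] j; case: (ltnP j n) => jn; [apply: le | rewrite out]. Qed.

Lemma eq_idxsum n B P P' (h h' : (nat -> nat) -> V) :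
  P =1 P' -> (forall phi, P phi -> h phi = h' phi) -> idxsum n B P h = idxsum n B P' h'.
Proof. by move=> eP eh; apply: eq_big => I; [exact: eP | exact: eh]. Qed.

Lemma idxsum_reindex n B P n' B' P' (h : (nat -> nat) -> V) (F F' : (nat -> nat) -> nat -> nat) :
  (forall phi, in_idxsum n B P phi -> in_idxsum n' B' P' (F phi) /\ F' (F phi) = phi) ->
  (forall psi, in_idxsum n' B' P' psi -> in_idxsum n B P (F' psi) /\ F (F' psi) = psi) ->
  idxsum n B P (fun phi => h (F phi)) = idxsum n' B' P' h.
Proof.
move=> FK F'K; rewrite /idxsum.
rewrite (reindex_onto (fun I => idx_of n' B' (F (ival I))) (fun J => idx_of n B (F' (ival J)))).
  apply: eq_big => I; last by move=> /in_idxsum_ival /FK [/idx_ofK ->].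
  case PI: (P (ival I)).
    have [FI e] := FK _ (in_idxsum_ival PI).
    by rewrite (idx_ofK FI) e ivalK eqxx andbT; case: FI.
  case: andP => // -[P'J /eqP eI].
  have [F'J _] := F'K _ (in_idxsum_ival P'J).
  by move: PI; rewrite -eI (idx_ofK F'J); case: F'J => _ _ ->.
move=> J /in_idxsum_ival /F'K [F'J e].
by rewrite (idx_ofK F'J) e ivalK.
Qed.

Lemma idxsum0 B P (h : (nat -> nat) -> V) :
  idxsum 0 B P h = if P (fun _ => 0%N) then h (fun _ => 0%N) else 0.
Proof.
have ival0 (I : {ffun 'I_0 -> 'I_B.+1}) : ival I = (fun _ => 0%N).
  by apply/funext => j; apply: ival_out.
rewrite /idxsum (eq_bigl (fun _ => P (fun _ => 0%N))) => [|I]; last by rewrite ival0.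
rewrite (eq_bigr (fun _ => h (fun _ => 0%N))) => [|I _]; last by rewrite ival0.
case: (P _); last by rewrite big_pred0.
by rewrite sumr_const card_ffun !card_ord expn0.
Qed.

Lemma idxsum_at0 n B P (h : (nat -> nat) -> V) :
  (forall phi j, P phi -> (j < n)%N -> phi j = 0%N) ->
  idxsum n B P h = if P (fun _ => 0%N) then h (fun _ => 0%N) else 0.
Proof.
move=> P0; rewrite -(idxsum0 B) -(@idxsum_reindex n B P 0 B P h id id) // => phi [out _ Pphi].
  by split=> //; split=> // j _; have [jn|/out //] := ltnP j n; exact: P0 Pphi jn.
by split=> //; split=> // j _; rewrite out.
Qed.

Definition icons (a : nat) phi (j : nat) : nat := if j is j'.+1 then phi j' else a.

Lemma idxsumS n B P (h : (nat -> nat) -> V) :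
  idxsum n.+1 B P h =
  \sum_(a < B.+1) idxsum n B (fun phi => P (icons a phi)) (fun phi => h (icons a phi)).
Proof.
rewrite /idxsum pair_big_dep /=.
pose tl (I : {ffun 'I_n.+1 -> 'I_B.+1}) : {ffun 'I_n -> 'I_B.+1} := [ffun j => I (lift ord0 j)].
pose join (aJ : 'I_B.+1 * {ffun 'I_n -> 'I_B.+1}) : {ffun 'I_n.+1 -> 'I_B.+1} :=
  [ffun j => if unlift ord0 j is Some j' then aJ.2 j' else aJ.1].
have ival_tl (I : {ffun 'I_n.+1 -> 'I_B.+1}) : icons (I ord0) (ival (tl I)) = ival I.
  apply/funext => -[|j] /=; first by rewrite -(ival_ord I ord0).
  have [jn|nj] := ltnP j n; last by rewrite !ival_out.
  by rewrite (ival_ord _ (Ordinal jn)) ffunE -(ival_ord I (lift ord0 (Ordinal jn))).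
rewrite (reindex (fun I : {ffun 'I_n.+1 -> 'I_B.+1} => (I ord0, tl I))) /=.
  by apply: eq_big => I; rewrite ival_tl.
apply: onW_bij; exists join.
  by move=> I; apply/ffunP => j; rewrite ffunE; case: unliftP => [j'|] -> //=; rewrite ffunE.
move=> [a J] /=; congr (_, _); first by rewrite ffunE unlift_none.
by apply/ffunP => j; rewrite !ffunE liftK.
Qed.

Definition ntake n1 phi (j : nat) : nat := if (j < n1)%N then phi j else 0%N.
Definition ndrop n1 phi (j : nat) : nat := phi (n1 + j)%N.

Lemma idxsum_concat n1 n2 B P1 (P2 : (nat -> nat) -> pred (nat -> nat))
    (h : (nat -> nat) -> (nat -> nat) -> V) :
  idxsum n1 B P1 (fun phi1 => idxsum n2 B (P2 phi1) (h phi1)) =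
  idxsum (n1 + n2) B (fun phi => P1 (ntake n1 phi) && P2 (ntake n1 phi) (ndrop n1 phi))
    (fun phi => h (ntake n1 phi) (ndrop n1 phi)).
Proof.
elim: n1 P1 P2 h => [|n1 IH] P1 P2 h.
  have ntake0 phi : ntake 0 phi = (fun _ => 0%N) by apply/funext.
  have ndrop0 phi : ndrop 0 phi = phi by apply/funext.
  rewrite idxsum0 add0n; case: (P1 _).
    by apply: eq_idxsum => phi; rewrite ntake0 ndrop0.
  by rewrite /idxsum big_pred0 // => I; rewrite ntake0.
have ntakeS a phi : ntake n1.+1 (icons a phi) = icons a (ntake n1 phi) by apply/funext => -[].
have ndropS a phi : ndrop n1.+1 (icons a phi) = ndrop n1 phi by apply/funext.
rewrite idxsumS addSn idxsumS; apply: eq_bigr => a _; rewrite IH.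
by apply: eq_idxsum => phi; rewrite ntakeS ndropS.
Qed.

Lemma idxsum_restrict n B P (Q : pred (nat -> nat)) (h : (nat -> nat) -> V) :
  (forall phi, P phi -> ~~ Q phi -> h phi = 0) ->
  idxsum n B P h = idxsum n B (fun phi => P phi && Q phi) h.
Proof.
move=> hQ; rewrite /idxsum (bigID (fun I => Q (ival I))) /= addrC big1 ?add0r //.
by move=> I /andP[]; apply: hQ.
Qed.

Lemma idxsum_bound n B B' P (h : (nat -> nat) -> V) :
  (forall phi, P phi -> (\sum_(j < n) phi j <= minn B B')%N) ->
  idxsum n B P h = idxsum n B' P h.
Proof.
move=> hP.
have le_bound C phi j : (minn B B' <= C)%N -> P phi -> (j < n)%N -> (phi j <= C)%N.
  by move=> leC Pphi jn; apply: leq_trans (leq_idx_sum _ jn) (leq_trans (hP _ Pphi) leC).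
rewrite -(@idxsum_reindex n B P n B' P h id id) // => phi [out _ Pphi].
  by split=> //; split=> // j; exact: le_bound (geq_minr _ _) Pphi.
by split=> //; split=> // j; exact: le_bound (geq_minl _ _) Pphi.
Qed.

Lemma sum_upd n phi i v : (i < n)%N ->
  (\sum_(j < n) upd phi i v j + phi i = \sum_(j < n) phi j + v)%N.
Proof.
move=> ilt; rewrite (bigD1 (Ordinal ilt)) // [in RHS](bigD1 (Ordinal ilt)) //= upd_eq.
rewrite (eq_bigr (fun j : 'I_n => phi j)) => [|j nj]; first by lia.
by rewrite upd_neq //; apply: contraNneq nj => e; apply/eqP/val_inj.
Qed.

Lemma idxsum_shift n r t i (h : (nat -> nat) -> V) : (i < n)%N ->
  (forall phi, phi i = 0%N -> h phi = 0) ->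
  idxsum n t (fun phi => upow n r phi == t) h =
  idxsum n t (fun psi => upow n r.+1 psi == t) (fun psi => h (upd psi i (psi i).+1)).
Proof.
move=> ilt h0; rewrite (@idxsum_restrict _ _ _ (fun phi => 0 < phi i)%N) => [|phi _];
  last by rewrite lt0n negbK => /eqP /h0.
pose inc psi := upd psi i (psi i).+1; pose dec phi := upd phi i (phi i).-1.
apply: esym; apply: (@idxsum_reindex n t _ n t _ h inc dec).
- move=> psi [out le /eqP upsi]; have sum_inc := sum_upd psi (psi i).+1 ilt.
  split; last by rewrite /dec /inc upd_upd upd_eq /= upd_id.
  split.
  + by move=> j nj; rewrite /inc upd_neq ?out //; apply: contraTneq nj => ->; rewrite -ltnNge.
  + by move=> j jn; apply: leq_trans (leq_idx_sum _ jn) _; move: upsi; rewrite /inc /upow; lia.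
  + by rewrite /inc upd_eq andbT; apply/eqP; move: upsi; rewrite /upow; lia.
- move=> phi [out le /andP[/eqP uphi pos]]; have sum_dec := sum_upd phi (phi i).-1 ilt.
  split; last by rewrite /inc /dec upd_upd upd_eq prednK // upd_id.
  split.
  + by move=> j nj; rewrite /dec upd_neq ?out //; apply: contraTneq nj => ->; rewrite -ltnNge.
  + by move=> j jn; apply: leq_trans (leq_idx_sum _ jn) _; move: uphi; rewrite /dec /upow; lia.
  + by apply/eqP; move: uphi; rewrite /dec /upow; lia.
Qed.

Lemma idxsumD n B P (h1 h2 : (nat -> nat) -> V) :
  idxsum n B P (fun phi => h1 phi + h2 phi) = idxsum n B P h1 + idxsum n B P h2.
Proof. exact: big_split. Qed.

Lemma idxsumB n B P (h1 h2 : (nat -> nat) -> V) :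
  idxsum n B P (fun phi => h1 phi - h2 phi) = idxsum n B P h1 - idxsum n B P h2.
Proof. exact: sumrB. Qed.

Lemma idxsum_sum n B P (I : Type) (s : seq I) (Q : pred I) (h : I -> (nat -> nat) -> V) :
  idxsum n B P (fun phi => \sum_(i <- s | Q i) h i phi) = \sum_(i <- s | Q i) idxsum n B P (h i).
Proof. exact: exchange_big. Qed.

End IndexSums.

Lemma idxsumZ (R : pzRingType) (V : lmodType R) n B P (c : R) (h : (nat -> nat) -> V) :
  idxsum n B P (fun phi => c *: h phi) = c *: idxsum n B P h.
Proof. by rewrite /idxsum scaler_sumr. Qed.

Ltac case_ifs := repeat match goal with |- context [if ?b then _ else _] =>
  let H := fresh "H" in case: (boolP b) => H end.

Lemma sum_ord_add a b (F : nat -> nat) :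
  (\sum_(l < a + b) F l = \sum_(l < a) F l + \sum_(l < b) F (a + l))%N.
Proof. by rewrite big_split_ord. Qed.

Section CompositionIndices.
Variables (n m i : nat) (r s t : nat).
Hypothesis ilt : (i < n)%N.
Implicit Types (phi psi : nat -> nat) (F : nat -> nat).

Definition comp_outer phi (l : nat) : nat :=
  if (l < i)%N then phi l else if l == i then (s + \sum_(j < m) phi (i + j))%N
  else phi (l + m - 1)%N.

(* An index of [f o_i g] (length [n.-1 + m]) becomes an index of [f] (length [n]),
   whose [i]-th entry is [s] plus the total of the block [[i, i + m)], followed by
   that block, which indexes [g]. *)
Definition comp_split phi (l : nat) : nat :=
  if (l < n)%N then comp_outer phi l else if (l < n + m)%N then phi (i + (l - n))%N else 0%N.

Definition comp_join psi (l : nat) : nat :=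
  if (l < i)%N then psi l else if (l < i + m)%N then psi (n + (l - i))%N
  else if (l < n.-1 + m)%N then psi (l - m + 1)%N else 0%N.

Lemma sum_inner_split F : (\sum_(l < n.-1 + m) F l =
  \sum_(l < i) F l + (\sum_(l < m) F (i + l) + \sum_(l < n.-1 - i) F (i + (m + l))))%N.
Proof.
rewrite (_ : n.-1 + m = i + (m + (n.-1 - i)))%N; last by lia.
rewrite sum_ord_add (sum_ord_add m (n.-1 - i) (fun l => F (i + l)%N)).
by congr (_ + (_ + _))%N; apply: eq_bigr => l _; rewrite addnA.
Qed.

Lemma sum_outer_split F : (\sum_(l < n) F l =
  \sum_(l < i) F l + (F i + \sum_(l < n.-1 - i) F (i + (1 + l))))%N.
Proof.
rewrite [in LHS](_ : n = i + (1 + (n.-1 - i)))%N; last by lia.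
rewrite sum_ord_add (sum_ord_add 1 (n.-1 - i) (fun l => F (i + l)%N)) big_ord1 addn0.
by congr (_ + (_ + _))%N; apply: eq_bigr => l _; rewrite addnA.
Qed.

Lemma sum_comp_outer phi : (\sum_(l < n) comp_outer phi l = s + \sum_(l < n.-1 + m) phi l)%N.
Proof.
rewrite sum_outer_split sum_inner_split /comp_outer ltnn eqxx.
rewrite (eq_bigr (fun l : 'I_i => phi l)) => [|l _]; last by rewrite ltn_ord.
rewrite [X in (_ + (_ + X))%N](eq_bigr (fun l : 'I_(n.-1 - i) => phi (i + (m + l)))%N).
  by rewrite -!addnA addnCA.
by move=> l _; case_ifs; try lia; congr phi; lia.
Qed.

Lemma sum_comp_join psi :
  (\sum_(l < n.-1 + m) comp_join psi l + psi i = \sum_(l < n) psi l + \sum_(j < m) psi (n + j))%N.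
Proof.
have e0 : (\sum_(l < i) comp_join psi l = \sum_(l < i) psi l)%N.
  by apply: eq_bigr => l _; rewrite /comp_join ltn_ord.
have e1 : (\sum_(l < m) comp_join psi (i + l) = \sum_(l < m) psi (n + l))%N.
  apply: eq_bigr => l _; have := ltn_ord l; rewrite /comp_join => lm.
  by case_ifs; try lia; congr psi; lia.
have e2 : (\sum_(l < n.-1 - i) comp_join psi (i + (m + l)) =
           \sum_(l < n.-1 - i) psi (i + (1 + l)))%N.
  apply: eq_bigr => l _; have := ltn_ord l; rewrite /comp_join => lni.
  by case_ifs; try lia; congr psi; lia.
by rewrite sum_outer_split sum_inner_split e0 e1 e2; lia.
Qed.

Lemma ntake_comp_split phi l : (l < n)%N -> ntake n (comp_split phi) l = comp_outer phi l.
Proof. by move=> ln; rewrite /ntake /comp_split ln. Qed.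

Lemma ndrop_comp_split phi j : (j < m)%N -> ndrop n (comp_split phi) j = phi (i + j)%N.
Proof. by move=> jm; rewrite /ndrop /comp_split; case_ifs; try lia; congr phi; lia. Qed.

Definition comp_lhs_pred phi := upow (n.-1 + m) (r + s) phi == t.
Definition comp_rhs_pred psi :=
  (upow n r (ntake n psi) == t) && (upow m s (ndrop n psi) == ntake n psi i).

Lemma in_idxsum_comp_split phi : in_idxsum (n.-1 + m) t comp_lhs_pred phi ->
  in_idxsum (n + m) t comp_rhs_pred (comp_split phi) /\ comp_join (comp_split phi) = phi.
Proof.
move=> hphi; have [out _ /eqP uphi] := hphi; have sum_outer := sum_comp_outer phi.
split; last first.
  apply/funext => l; rewrite /comp_join /comp_split /comp_outer.
  by case_ifs; try lia; try (by congr phi; lia); rewrite out //; lia.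
split.
- by move=> l nl; rewrite /comp_split; case_ifs => //; lia.
- move=> l _; rewrite /comp_split; case: ifP => ln.
    by apply: leq_trans (leq_idx_sum _ ln) _; rewrite sum_outer; move: uphi; rewrite /upow; lia.
  by case: ifP => // _; apply: in_idxsum_le hphi _.
- apply/andP; split; apply/eqP.
    rewrite /upow (eq_bigr (fun j : 'I_n => comp_outer phi j)) => [|j _];
      last exact: ntake_comp_split.
    by rewrite sum_outer; move: uphi; rewrite /upow; lia.
  rewrite /upow (eq_bigr (fun j : 'I_m => phi (i + j)%N)) => [|j _]; last exact: ndrop_comp_split.
  by rewrite ntake_comp_split // /comp_outer ltnn eqxx.
Qed.

Lemma in_idxsum_comp_join psi : in_idxsum (n + m) t comp_rhs_pred psi ->
  in_idxsum (n.-1 + m) t comp_lhs_pred (comp_join psi) /\ comp_split (comp_join psi) = psi.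
Proof.
move=> hpsi; have [out _ /andP[/eqP upsi /eqP upsi']] := hpsi.
have {}upsi : upow n r psi = t.
  by rewrite -upsi /upow; congr (_ + _)%N; apply: eq_bigr => j _; rewrite /ntake ltn_ord.
have {}upsi' : (s + \sum_(j < m) psi (n + j))%N = psi i by rewrite /ntake ilt in upsi'.
split; last first.
  apply/funext => l; rewrite /comp_join /comp_split /comp_outer.
  case_ifs; try lia; try (by congr psi; lia); last by rewrite out //; lia.
  rewrite (_ : l = i); last by lia.
  rewrite -upsi'; congr (_ + _)%N; apply: eq_bigr => j _; have jm := ltn_ord j.
  by case_ifs; try lia; congr psi; lia.
split.
- by move=> l hl; rewrite /comp_join; case_ifs => //; lia.
- by move=> l _; rewrite /comp_join; case_ifs => //; apply: in_idxsum_le hpsi _.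
- by apply/eqP; have := sum_comp_join psi; move: upsi upsi'; rewrite /upow; lia.
Qed.

End CompositionIndices.

(** * Coefficients of inputs in CC^-(A) *)

Definition coef_deg (DS : nat -> int) (phi : nat -> nat) j := DS j - 2 * (phi j : int).
Definition coef {W : Type} (X : nat -> nat -> W) (phi : nat -> nat) j := X j (phi j).

Lemma coef_upd {W : Type} (X : nat -> nat -> W) j Y phi :
  coef (upd X j Y) phi = upd (coef X phi) j (Y (phi j)).
Proof. by apply/funext => l; rewrite /coef /upd; case: eqP => // ->. Qed.

Lemma coef_deg_shift DS j (e : int) phi :
  coef_deg (upd DS j (DS j + e)) phi = upd (coef_deg DS phi) j (coef_deg DS phi j + e).
Proof. by apply/funext => l; rewrite /coef_deg /upd; case: eqP => // ->; ring. Qed.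

Lemma coef_deg_upd DS phi j v :
  coef_deg DS (upd phi j v) = upd (coef_deg DS phi) j (DS j - 2 * (v : int)).
Proof. by apply/funext => l; rewrite /coef_deg /upd; case: eqP => // ->. Qed.

Lemma coef_upd_idx {W : Type} (X : nat -> nat -> W) phi j v :
  coef X (upd phi j v) = upd (coef X phi) j (X j v).
Proof. by apply/funext => l; rewrite /coef /upd; case: eqP => // ->. Qed.

Lemma sum_coef_deg n DS phi :
  \sum_(j < n) coef_deg DS phi j = \sum_(j < n) DS j - 2 * ((\sum_(j < n) phi j)%N : int).
Proof. by rewrite sumrB -mulr_sumr (big_morph Posz PoszD (erefl 0%Z)). Qed.

Lemma permseq_ord n (sg : 'S_n) (T : Type) (x : nat -> T) (j : 'I_n) : permseq sg x j = x (sg j).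
Proof. by rewrite /permseq valK. Qed.

Lemma permseq_out n (sg : 'S_n) (T : Type) (x : nat -> T) j : (n <= j)%N -> permseq sg x j = x j.
Proof. by move=> nj; rewrite /permseq; case: insubP => //= j'; rewrite ltnNge nj. Qed.

Section Permutations.
Variables (n : nat) (sg : 'S_n).

Lemma permseqK (T : Type) (x : nat -> T) : permseq sg^-1 (permseq sg x) = x.
Proof.
apply/funext => l; have [ln|nl] := ltnP l n; last by rewrite !permseq_out.
by rewrite (permseq_ord _ _ (Ordinal ln)) permseq_ord permKV.
Qed.

Lemma permseq_coef_deg DS phi :
  coef_deg (permseq sg DS) (permseq sg phi) = permseq sg (coef_deg DS phi).
Proof. by apply/funext => l; rewrite /coef_deg /permseq; case: insubP. Qed.

Lemma permseq_coef (W : Type) (X : nat -> nat -> W) phi :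
  coef (permseq sg X) (permseq sg phi) = permseq sg (coef X phi).
Proof. by apply/funext => l; rewrite /coef /permseq; case: insubP. Qed.

Lemma upow_permseq r phi : upow n r (permseq sg phi) = upow n r phi.
Proof.
rewrite /upow (eq_bigr (fun j : 'I_n => phi (sg j))) => [|j _]; last exact: permseq_ord.
by rewrite [in RHS](reindex_perm sg).
Qed.

Lemma in_idxsum_permseq B r t phi :
  in_idxsum n B (fun phi => upow n r phi == t) phi ->
  in_idxsum n B (fun phi => upow n r phi == t) (permseq sg phi).
Proof.
move=> [out le uphi]; split; last by rewrite upow_permseq.
  by move=> j nj; rewrite permseq_out // out.
by move=> j jn; rewrite (permseq_ord _ _ (Ordinal jn)); apply: le.
Qed.

End Permutations.

Section Signs.
Variable k : fieldType.

Lemma ksgnE (z : int) : ksgn k z = (-1) ^ z.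
Proof.
rewrite /ksgn; case: z => n /=; first by rewrite signr_odd.
have -> : (-1) ^ Negz n = ((-1) ^+ odd n.+1)^-1 :> k by rewrite signr_odd.
by rewrite /=; case: odd; rewrite /= ?invr1 ?invrN1.
Qed.

Lemma ksgn_even (a b : int) : ksgn k (a + 2 * b) = ksgn k a.
Proof.
rewrite !ksgnE expfzDr ?oppr_eq0 ?oner_neq0 // -exprz_exp.
by rewrite (_ : (-1) ^ 2 = 1 :> k) ?exp1rz ?mulr1 //; exact: (@sqrr_sign k 1).
Qed.

Lemma ksgn_sum_coef_deg i DS phi :
  ksgn k (\sum_(j < i) coef_deg DS phi j) = ksgn k (\sum_(j < i) DS j).
Proof. by rewrite sum_coef_deg -mulrN ksgn_even. Qed.

Lemma kosz_coef_deg n (sg : 'S_n) DS phi : kosz k sg (coef_deg DS phi) = kosz k sg DS.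
Proof.
apply: eq_bigr => a _; apply: eq_bigr => b _; rewrite /coef_deg.
set da := DS a; set db := DS b; set pa := Posz (phi a); set pb := Posz (phi b).
by rewrite (_ : _ * _ = da * db + 2 * (2 * (pa * pb) - da * pb - pa * db)) ?ksgn_even //; ring.
Qed.

End Signs.

Section MixedComplex.
Variables (k : fieldType) (A : gdata k).
Hypothesis hA : is_mixed_complex A.

Lemma gdeg0 m : gdeg A m 0.
Proof. by case: hA => -[]. Qed.

Lemma gdegD m x y : gdeg A m x -> gdeg A m y -> gdeg A m (x + y).
Proof. by case: hA => -[_ hL] _ _ _ _ hx hy; have := hL m 1 _ _ hx hy; rewrite scale1r. Qed.

Lemma gdeg_sum m (I : Type) (s : seq I) (P : pred I) (F : I -> gV A) :
  (forall i, P i -> gdeg A m (F i)) -> gdeg A m (\sum_(i <- s | P i) F i).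
Proof. by move=> hF; apply: big_ind => //; [exact: gdeg0 | exact: gdegD]. Qed.

Lemma gdeg_d m x : gdeg A m x -> gdeg A (m + 1) (gd A x).
Proof. by case: hA => _ _ [hd _] _ _; apply: hd. Qed.

Lemma gdeg_D m x : gdeg A m x -> gdeg A (m - 1) (gD A x).
Proof. by case: hA => _ _ [_ hD] _ _; apply: hD. Qed.

Definition hlinear (L : gV A -> gV A) :=
  forall m (c : k) x y, gdeg A m x -> gdeg A m y -> L (c *: x + y) = c *: L x + L y.

Lemma hlinear_d : hlinear (gd A).
Proof. by case: hA => _ _ _ hL _ m c x y hx hy; case: (hL m c x y hx hy). Qed.

Lemma hlinear_D : hlinear (gD A).
Proof. by case: hA => _ _ _ hL _ m c x y hx hy; case: (hL m c x y hx hy). Qed.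

Section HomogeneousLinear.
Variable L : gV A -> gV A.
Hypothesis hL : hlinear L.

Lemma hlinear0 : L 0 = 0.
Proof.
have := hL 1 (gdeg0 0) (gdeg0 0); rewrite !scale1r addr0 => e.
by apply: (@addrI _ (L 0)); rewrite -e addr0.
Qed.

Lemma hlinear_sum m (I : Type) (s : seq I) (P : pred I) (F : I -> gV A) :
  (forall i, P i -> gdeg A m (F i)) -> L (\sum_(i <- s | P i) F i) = \sum_(i <- s | P i) L (F i).
Proof.
move=> hF; elim: s => [|i s IH]; first by rewrite !big_nil hlinear0.
rewrite !big_cons; case: ifP => Pi //.
by rewrite -IH -[F i]scale1r (hL _ (hF _ Pi) (gdeg_sum _ hF)) !scale1r.
Qed.

Lemma hlinear_idxsum m n B (P : pred (nat -> nat)) (h : (nat -> nat) -> gV A) :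
  (forall phi, P phi -> gdeg A m (h phi)) ->
  L (idxsum n B P h) = idxsum n B P (fun phi => L (h phi)).
Proof. by move=> hh; apply: (hlinear_sum (m := m)) => I; apply: hh. Qed.

End HomogeneousLinear.

Definition htup_but n ds (x : nat -> gV A) j :=
  forall l, (l < n)%N -> l != j -> gdeg A (ds l) (x l).

Lemma htup_butW n ds x j : htup A n ds x -> htup_but n ds x j.
Proof. by move=> hx l ln _; apply: hx. Qed.

Lemma htup_upd n ds x j v : htup_but n ds x j -> gdeg A (ds j) v -> htup A n ds (upd x j v).
Proof. by move=> hx hv l ln; rewrite /upd; case: eqP => [->|/eqP] //; apply: hx. Qed.

Lemma htup_but_upd n ds x j m : htup A n ds x -> htup_but n (upd ds j m) x j.
Proof. by move=> hx l ln lj; rewrite upd_neq //; apply: hx. Qed.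

Section Multilinear.
Variables (n : nat) (p : int) (f : nop (gV A)).
Hypothesis hf : isEnd A n p f.

Lemma isEnd_cong ds ds' x x' : (forall j, (j < n)%N -> x j = x' j) ->
  htup A n ds x -> htup A n ds' x' -> f ds x = f ds' x'.
Proof. by case: hf => hc _ _; apply: hc. Qed.

Lemma isEnd_deg ds x : htup A n ds x -> gdeg A (\sum_(j < n) ds j + p) (f ds x).
Proof. by case: hf => _ hd _; apply: hd. Qed.

Lemma isEnd_lin ds x j (c : k) y : (j < n)%N -> htup A n ds x -> gdeg A (ds j) y ->
  f ds (upd x j (c *: x j + y)) = c *: f ds x + f ds (upd x j y).
Proof. by case: hf => _ _ hl; apply: hl. Qed.

Lemma isEnd_upd0 ds x j : (j < n)%N -> htup_but n ds x j -> f ds (upd x j 0) = 0.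
Proof.
move=> jn hx; have hx0 := htup_upd hx (gdeg0 (ds j)).
have := isEnd_lin 1 jn hx0 (gdeg0 (ds j)).
rewrite upd_eq scaler0 addr0 scale1r upd_upd => e.
by apply: (@addrI _ (f ds (upd x j 0))); rewrite -e addr0.
Qed.

Lemma isEnd_eq0 ds x j : (j < n)%N -> htup A n ds x -> x j = 0 -> f ds x = 0.
Proof. by move=> jn hx xj0; rewrite -(upd_id x j) xj0 (isEnd_upd0 jn (htup_butW hx)). Qed.

Lemma isEnd_updD ds x j a b : (j < n)%N -> htup_but n ds x j ->
  gdeg A (ds j) a -> gdeg A (ds j) b ->
  f ds (upd x j (a + b)) = f ds (upd x j a) + f ds (upd x j b).
Proof.
move=> jn hx ha hb; have := isEnd_lin 1 jn (htup_upd hx ha) hb.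
by rewrite !upd_upd upd_eq !scale1r.
Qed.

Lemma isEnd_upd_sum ds x j (I : Type) (s : seq I) (P : pred I) (F : I -> gV A) :
  (j < n)%N -> htup_but n ds x j -> (forall i, P i -> gdeg A (ds j) (F i)) ->
  f ds (upd x j (\sum_(i <- s | P i) F i)) = \sum_(i <- s | P i) f ds (upd x j (F i)).
Proof.
move=> jn hx hF; elim: s => [|i s IH]; first by rewrite !big_nil isEnd_upd0.
rewrite !big_cons; case: ifP => Pi //.
by rewrite isEnd_updD ?IH //; [exact: hF | exact: gdeg_sum].
Qed.

Lemma isEnd_upd_idxsum ds x j m B (P : pred (nat -> nat)) h : (j < n)%N -> htup_but n ds x j ->
  (forall phi, P phi -> gdeg A (ds j) (h phi)) ->
  f ds (upd x j (idxsum m B P h)) = idxsum m B P (fun phi => f ds (upd x j (h phi))).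
Proof. by move=> jn hx hh; apply: isEnd_upd_sum => // I; apply: hh. Qed.

End Multilinear.

(** * The map Phi *)

Lemma PhiE n (f : nop (gV A)) r DS (X : nat -> gV (CC A)) t : Phi n f r DS X t =
  idxsum n t (fun phi => upow n r phi == t) (fun phi => f (coef_deg DS phi) (coef X phi)).
Proof.
rewrite /Phi /idxsum; apply: eq_bigl => I.
by rewrite /upow (eq_bigr (fun j : 'I_n => ival I j)) // => j _; rewrite ival_ord.
Qed.

Lemma htup_coef n DS X phi : htup (CC A) n DS X -> htup A n (coef_deg DS phi) (coef X phi).
Proof. by move=> hX j jn; case: (hX j jn) => _; apply. Qed.

Lemma CC_support n DS X : htup (CC A) n DS X ->
  exists N, forall j t, (j < n)%N -> (N <= t)%N -> X j t = 0.
Proof.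
elim: n => [|n IH] hX; first by exists 0%N.
have [N1 hN1] := IH (fun j jn => hX j (ltnW jn)).
have [[N2 hN2] _] := hX n (ltnSn n).
exists (maxn N1 N2) => j t; rewrite ltnS leq_eqVlt geq_max => /orP[/eqP ->|jn] /andP[t1 t2].
  exact: hN2.
exact: hN1.
Qed.

Section PhiEnd.
Variables (n : nat) (p : int) (f : nop (gV A)) (r : nat).
Hypothesis hf : isEnd A n p f.

Lemma Phi_term_deg DS X phi (t : nat) : htup (CC A) n DS X -> upow n r phi = t ->
  gdeg A (\sum_(j < n) DS j + (p + 2 * (r : int)) - 2 * (t : int))
    (f (coef_deg DS phi) (coef X phi)).
Proof.
move=> hX <-; have := isEnd_deg hf (htup_coef phi hX).
by rewrite sum_coef_deg /upow PoszD; congr (gdeg A _ _); ring.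
Qed.

Lemma Phi_cong DS DS' X X' : (forall j, (j < n)%N -> X j = X' j) ->
  htup (CC A) n DS X -> htup (CC A) n DS' X' -> Phi n f r DS X = Phi n f r DS' X'.
Proof.
move=> eX hX hX'; apply/funext => t; rewrite !PhiE; apply: eq_idxsum => // phi _.
by apply: (isEnd_cong hf) (htup_coef phi hX) (htup_coef phi hX') => j jn; rewrite /coef eX.
Qed.

Lemma Phi_support DS X : htup (CC A) n DS X ->
  exists N, forall t, (N <= t)%N -> Phi n f r DS X t = 0.
Proof.
move=> hX; have [N hN] := CC_support hX.
exists (r + n * N).+1 => t ltt; rewrite PhiE /idxsum big1 // => I /eqP upowI.
have [j Nj|small] := pickP (fun j : 'I_n => N <= ival I j)%N.
  by apply: (isEnd_eq0 hf (ltn_ord j) (htup_coef _ hX)); apply: hN.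
have : (\sum_(j < n) ival I j <= \sum_(j < n) N)%N.
  by apply: leq_sum => j _; rewrite ltnW // ltnNge small.
by rewrite sum_nat_const card_ord; move: ltt upowI; rewrite /upow; lia.
Qed.

Lemma Phi_coef_deg DS X (t : nat) : htup (CC A) n DS X ->
  gdeg A (\sum_(j < n) DS j + (p + 2 * (r : int)) - 2 * (t : int)) (Phi n f r DS X t).
Proof. by move=> hX; rewrite PhiE; apply: gdeg_sum => I /eqP; apply: Phi_term_deg. Qed.

Lemma Phi_lin DS X j (c : k) Y : (j < n)%N -> htup (CC A) n DS X -> gdeg (CC A) (DS j) Y ->
  Phi n f r DS (upd X j (c *: X j + Y)) = c *: Phi n f r DS X + Phi n f r DS (upd X j Y).
Proof.
move=> jn hX [_ hY]; apply/funext => t; rewrite !fctE !PhiE -idxsumZ -idxsumD.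
apply: eq_idxsum => // phi _; rewrite !coef_upd.
exact: (isEnd_lin hf _ jn (htup_coef phi hX) (hY (phi j))).
Qed.

Lemma Phi_isEnd : isEnd (CC A) n (p + 2 * (r : int)) (Phi n f r).
Proof.
split; [exact: Phi_cong | | exact: Phi_lin].
by move=> DS X hX; split; [exact: Phi_support | move=> t; exact: Phi_coef_deg].
Qed.

End PhiEnd.

Definition uconst (x : nat -> gV A) : nat -> gV (CC A) := fun j t => if t == 0%N then x j else 0.

Section ConstantInputs.
Variables (n : nat) (ds : nat -> int) (x : nat -> gV A).
Hypothesis hx : htup A n ds x.

Lemma htup_uconst : htup (CC A) n ds (uconst x).
Proof.
move=> j jn; split; first by exists 1%N => -[|t].
by case=> [|t] /=; [rewrite mulr0 subr0; apply: hx | apply: gdeg0].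
Qed.

Lemma Phi_uconst p f r t : isEnd A n p f ->
  Phi n f r ds (uconst x) t = if t == r then f ds x else 0.
Proof.
move=> hf; rewrite PhiE (@idxsum_restrict _ _ _ _ (fun phi => [forall j : 'I_n, phi j == 0%N])).
  rewrite idxsum_at0 => [|phi j /andP[_ /forallP z] jn]; last exact/eqP/(z (Ordinal jn)).
  rewrite /upow big1 // addn0 eq_sym; case: eqP => //= _.
  rewrite (_ : [forall j, _] = true); last exact/forallP.
  by congr (f _ _); apply/funext => j; rewrite /coef_deg /coef /= ?mulr0 ?subr0.
move=> phi _ /forallPn[j nz]; apply: (isEnd_eq0 hf (ltn_ord j) (htup_coef _ htup_uconst)).
by rewrite /coef /uconst (negbTE nz).
Qed.

End ConstantInputs.

Lemma Phi_inj n (s : seq (int * nat)) (f : int -> nat -> nop (gV A)) :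
  uniq s -> (forall pr, pr \in s -> isEnd A n pr.1 (f pr.1 pr.2)) ->
  (forall DS X, htup (CC A) n DS X -> \sum_(pr <- s) Phi n (f pr.1 pr.2) pr.2 DS X = 0) ->
  forall pr, pr \in s -> forall ds x, htup A n ds x -> f pr.1 pr.2 ds x = 0.
Proof.
move=> us hs hsum [p0 r0] pin ds x hx /=.
have /(congr1 (fun F => F r0)) := hsum _ _ (htup_uconst hx).
rewrite fct_sumE big_seq (eq_bigr (fun pr => if pr.2 == r0 then f pr.1 pr.2 ds x else 0)).
  rewrite -big_seq -big_mkcond /= => sum0.
  set D := \sum_(j < n) ds j; pose y m := f (m - D) r0 ds x.
  have [_ direct _ _ _] := hA.
  (* In u-degree [r0] only the pairs [(a, r0)] contribute, in the distinct degrees [a + D]. *)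
  have -> : f p0 r0 ds x = y (p0 + D) by rewrite /y addrK.
  apply: (direct [seq pr.1 + D | pr <- s & pr.2 == r0]).
  - rewrite map_inj_in_uniq ?filter_uniq // => -[a b] [a' b'].
    by rewrite !mem_filter /= => /andP[/eqP -> _] /andP[/eqP -> _] /addIr ->.
  - move=> m /mapP[[a b]]; rewrite mem_filter /= => /andP[/eqP -> ab] ->.
    by rewrite /y addrK addrC; have /= := isEnd_deg (hs _ ab) hx.
  - rewrite big_map big_filter -[RHS]sum0; apply: eq_bigr => -[a b] /= /eqP ->.
    by rewrite /y addrK.
  - by apply/mapP; exists (p0, r0); rewrite // mem_filter eqxx.
by move=> pr /hs hpr; rewrite (Phi_uconst hx _ _ hpr) eq_sym.
Qed.

Lemma Phi_unit DS (X : nat -> gV (CC A)) : Phi 1 (@eunit k (gV A)) 0 DS X = eunit DS X.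
Proof.
apply/funext => t; rewrite PhiE idxsumS big_ord_recr /= big1 ?add0r => [|a _].
  by rewrite idxsum0 /upow big_ord1 /= eqxx.
by rewrite idxsum0 /upow big_ord1 /= ifN // neq_ltn ltn_ord.
Qed.

Lemma Phi_eact n (f : nop (gV A)) r (sg : 'S_n) DS X :
  Phi n (eact sg f) r DS X = eact sg (Phi n f r) DS X.
Proof.
apply/funext => t; rewrite /eact !fctE !PhiE -idxsumZ.
pose P phi := upow n r phi == t.
rewrite -[in RHS](@idxsum_reindex _ n t P n t P _ (permseq sg) (permseq sg^-1)).
- by apply: eq_idxsum => // phi _; rewrite kosz_coef_deg permseq_coef_deg permseq_coef.
- by move=> phi /(in_idxsum_permseq sg) ?; rewrite permseqK.
- by move=> psi /(in_idxsum_permseq sg^-1) ?; rewrite -{2}(invgK sg) permseqK.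
Qed.

Lemma CC_DE (Y : gV (CC A)) t : gD (CC A) Y t = gD A (Y t).
Proof. by []. Qed.

Lemma CC_dE (Y : gV (CC A)) t :
  gd (CC A) Y t = gd A (Y t) + (if t is t'.+1 then gD A (Y t') else 0).
Proof. by []. Qed.

Lemma Phi_succ n (f : nop (gV A)) r DS X t :
  Phi n f r.+1 DS X t = if t is t'.+1 then Phi n f r DS X t' else 0.
Proof.
case: t => [|t]; rewrite !PhiE.
  by rewrite /idxsum big_pred0 // => I; rewrite /upow addSn.
rewrite (@idxsum_bound _ n t.+1 t) => [|phi /eqP]; last by rewrite /upow; lia.
by apply: eq_idxsum => // phi; rewrite /upow addSn eqSS.
Qed.

Section PhiDifferentials.
Variables (n : nat) (p : int) (f : nop (gV A)).
Hypothesis hf : isEnd A n p f.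

Definition slot_term e i DS (X : nat -> gV (CC A)) (Y : nat -> gV A) phi :=
  f (upd (coef_deg DS phi) i (coef_deg DS phi i + e)) (upd (coef X phi) i (Y (phi i))).

Lemma Phi_slot r e i DS X Y t :
  Phi n f r (upd DS i (DS i + e)) (upd X i Y) t =
  idxsum n t (fun phi => upow n r phi == t) (slot_term e i DS X Y).
Proof. by rewrite PhiE; apply: eq_idxsum => // phi _; rewrite coef_deg_shift coef_upd. Qed.

(* [dEnd] and [DEnd] are the instances [L, e] = [gd A, 1] and [gD A, -1]. *)
Lemma Phi_bracket (L : gV A -> gV A) (e : int) r DS X t : hlinear L -> htup (CC A) n DS X ->
  Phi n (fun ds x => L (f ds x) - ksgn k p *: \sum_(i < n) ksgn k (\sum_(j < i) ds j) *:
                       f (upd ds i (ds i + e)) (upd x i (L (x i)))) r DS X t =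
  L (Phi n f r DS X t) - ksgn k p *: \sum_(i < n) ksgn k (\sum_(j < i) DS j) *:
    idxsum n t (fun phi => upow n r phi == t) (slot_term e i DS X (fun s => L (X i s))).
Proof.
move=> hL hX; rewrite PhiE idxsumB idxsumZ idxsum_sum; congr (_ - _ *: _).
  by rewrite PhiE (hlinear_idxsum hL _ _ (fun phi e => Phi_term_deg hf hX (eqP e))).
apply: eq_bigr => i _; rewrite -idxsumZ.
by apply: eq_idxsum => // phi _; rewrite ksgn_sum_coef_deg.
Qed.

Lemma Phi_DEnd r DS X : htup (CC A) n DS X ->
  Phi n (DEnd A n p f) r DS X = DEnd (CC A) n (p + 2 * (r : int)) (Phi n f r) DS X.
Proof.
move=> hX; apply/funext => t; rewrite (Phi_bracket _ _ _ hlinear_D hX).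
rewrite /DEnd !fctE fct_sumE CC_DE ksgn_even; congr (_ - _ *: _).
by apply: eq_bigr => i _; rewrite fctE Phi_slot.
Qed.

Lemma Phi_d_slot r i DS X t : (i < n)%N -> htup (CC A) n DS X ->
  Phi n f r (upd DS i (DS i + 1)) (upd X i (gd (CC A) (X i))) t =
  idxsum n t (fun phi => upow n r phi == t) (slot_term 1 i DS X (fun s => gd A (X i s))) +
  idxsum n t (fun phi => upow n r.+1 phi == t) (slot_term (-1) i DS X (fun s => gD A (X i s))).
Proof.
(* The [u Delta] part of the differential of CC^-(A) shifts the [i]-th index by one. *)
move=> ilt hX; pose Dprev s := if s is s'.+1 then gD A (X i s') else 0.
have split_d phi : slot_term 1 i DS X (gd (CC A) (X i)) phi =
    slot_term 1 i DS X (fun s => gd A (X i s)) phi + slot_term 1 i DS X Dprev phi.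
  have hx := htup_coef phi hX.
  rewrite /slot_term (isEnd_updD hf ilt (htup_but_upd _ hx)) ?upd_eq //.
    exact: gdeg_d (hx i ilt).
  case e: (phi i) => [|a]; first exact: gdeg0.
  have := gdeg_D (htup_coef (fun _ => a) hX ilt); congr (gdeg A _ _).
  by rewrite /coef_deg e intS; ring.
rewrite Phi_slot (eq_idxsum _ _ (frefl _) (fun phi _ => split_d phi)) idxsumD; congr (_ + _).
rewrite (idxsum_shift r t ilt) => [|phi e]; last first.
  by rewrite /slot_term e (isEnd_upd0 hf ilt (htup_but_upd _ (htup_coef phi hX))).
apply: eq_idxsum => // psi _; rewrite /slot_term coef_deg_upd coef_upd_idx !upd_upd !upd_eq.
by congr (f (upd _ i _) _); rewrite /coef_deg intS; ring.
Qed.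

Lemma Phi_dEnd r DS X : htup (CC A) n DS X ->
  Phi n (dEnd A n p f) r DS X + Phi n (DEnd A n p f) r.+1 DS X =
  dEnd (CC A) n (p + 2 * (r : int)) (Phi n f r) DS X.
Proof.
move=> hX; apply/funext => t.
rewrite fctE (Phi_bracket _ _ _ hlinear_d hX) (Phi_bracket _ _ _ hlinear_D hX) Phi_succ.
rewrite /dEnd !fctE fct_sumE CC_dE ksgn_even.
under [in RHS]eq_bigr => i _ do rewrite fctE (Phi_d_slot _ _ (ltn_ord i) hX) scalerDr.
rewrite big_split scalerDr opprD !addrA; congr (_ + _).
rewrite addrAC; congr (_ + _ + _).
by case: t => [|t]; rewrite ?(hlinear0 hlinear_D).
Qed.

End PhiDifferentials.

Section Composition.
Variables (n m : nat) (p q : int) (f g : nop (gV A)) (r s i : nat).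
Hypotheses (ilt : (i < n)%N) (hf : isEnd A n p f) (hg : isEnd A m q g).
Variables (DS : nat -> int) (X : nat -> gV (CC A)).
Hypothesis hX : htup (CC A) (n.-1 + m) DS X.

Definition comp_deg l :=
  if (l < i)%N then DS l else if l == i then \sum_(j < m) DS (i + j)%N + (q + 2 * (s : int))
  else DS (l + m - 1)%N.

Definition comp_input l :=
  if (l < i)%N then X l else if l == i then Phi m g s (fun j => DS (i + j)%N) (fun j => X (i + j)%N)
  else X (l + m - 1)%N.

Lemma comp_input_i : comp_input i = Phi m g s (fun j => DS (i + j)%N) (fun j => X (i + j)%N).
Proof. by rewrite /comp_input ltnn eqxx. Qed.

Lemma htup_block : htup (CC A) m (fun j => DS (i + j)%N) (fun j => X (i + j)%N).
Proof. by move=> j jm; apply: hX; lia. Qed.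

Lemma htup_comp_input : htup (CC A) n comp_deg comp_input.
Proof.
move=> l ln; rewrite /comp_deg /comp_input; case_ifs; try (by apply: hX; lia).
by case: (Phi_isEnd s hg) => _ hdeg _; apply: hdeg htup_block.
Qed.

Definition comp_term psi kap := f (coef_deg comp_deg psi)
  (upd (coef comp_input psi) i
     (g (coef_deg (fun j => DS (i + j)%N) kap) (coef (fun j => X (i + j)%N) kap))).

Lemma Phi_comp_input t : Phi n f r comp_deg comp_input t =
  idxsum (n + m) t (comp_rhs_pred n m i r s t) (fun psi => comp_term (ntake n psi) (ndrop n psi)).
Proof.
rewrite PhiE; transitivity (idxsum n t (fun psi => upow n r psi == t)
  (fun psi => idxsum m t (fun kap => upow m s kap == psi i) (comp_term psi))); last first.
  exact: idxsum_concat.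
apply: eq_idxsum => // psi /eqP upsi.
rewrite -[coef comp_input psi](upd_id _ i) {2}/coef comp_input_i PhiE.
rewrite (@idxsum_bound _ m (psi i) t) => [|kap /eqP]; last first.
  by have := leq_idx_sum psi ilt; move: upsi; rewrite /upow; lia.
have hpsi := htup_butW (htup_coef psi htup_comp_input) (j := i).
rewrite (isEnd_upd_idxsum hf _ _ ilt hpsi) // => kap /eqP ukap.
by have := Phi_term_deg hg htup_block ukap; rewrite /coef_deg /comp_deg ltnn eqxx.
Qed.

Lemma ecomp_term phi : ecomp i m q f g (coef_deg DS phi) (coef X phi) =
  ksgn k ((q + 2 * (s : int)) * \sum_(j < i) DS j) *:
    comp_term (ntake n (comp_split n m i s phi)) (ndrop n (comp_split n m i s phi)).
Proof.
rewrite /ecomp; congr (_ *: _).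
  rewrite sum_coef_deg; set S := \sum_(j < i) DS j; set P := Posz _.
  rewrite (_ : q * (S - 2 * P) = (q + 2 * (s : int)) * S + 2 * (- ((s : int) * S) - q * P)).
    exact: ksgn_even.
  by ring.
set psi := ntake n _; set kap := ndrop n _.
have kapE j : (j < m)%N -> kap j = phi (i + j)%N by move=> jm; rewrite /kap ndrop_comp_split.
have psiE l : (l < n)%N -> psi l = comp_outer m i s phi l.
  by move=> ln; rewrite /psi ntake_comp_split.
have hphi := htup_coef phi hX.
have hblock := htup_coef (fun j => phi (i + j)%N) htup_block.
have ukap : upow m s kap = psi i.
  rewrite psiE // /comp_outer ltnn eqxx /upow.
  by congr (_ + _)%N; apply: eq_bigr => j _; rewrite kapE.
(* The degree labels of the two sides differ; [isEnd_cong] only needs both to be homogeneous. *)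
apply: (isEnd_cong hf).
- move=> l ln; rewrite /upd; case: eqP => [->|/eqP li].
    rewrite ltnn; apply: (isEnd_cong hg) hblock (htup_coef kap htup_block) => j jm.
    by rewrite /coef kapE.
  rewrite /coef /comp_input (negbTE li) psiE // /comp_outer (negbTE li); case_ifs => //; lia.
- move=> l ln; case_ifs; [apply: hphi; lia | exact (isEnd_deg hg hblock) | apply: hphi; lia].
- apply: htup_upd (htup_butW (htup_coef psi htup_comp_input)) _.
  by have := Phi_term_deg hg htup_block ukap; rewrite /coef_deg /comp_deg ltnn eqxx.
Qed.

Lemma Phi_ecomp : Phi (n.-1 + m) (ecomp i m q f g) (r + s) DS X =
  ecomp i m (q + 2 * (s : int)) (Phi n f r) (Phi m g s) DS X.
Proof.
apply/funext => t; transitivity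
  (ksgn k ((q + 2 * (s : int)) * \sum_(j < i) DS j) *: Phi n f r comp_deg comp_input t) => //.
rewrite Phi_comp_input PhiE -idxsumZ.
rewrite -[in RHS](idxsum_reindex _ (@in_idxsum_comp_split n m i r s t ilt)
                                   (@in_idxsum_comp_join n m i r s t ilt)).
by apply: eq_idxsum => // phi _; rewrite ecomp_term.
Qed.

End Composition.

End MixedComplex.

Theorem mainTheorem10 (k : fieldType) (A : gdata k) :
  is_mixed_complex A ->
  [/\ (
   (* Phi (f u^r) is an element of End_{CC^-(A)}(n) of degree |f| + 2r *)
   (forall (n : nat) (p : int) (f : nop (gV A)) (r : nat), isEnd A n p f -> isEnd (CC A) n (p + 2 * (r : int)) (Phi n f r)) /\
   (* injectivity on CC^-(End_A)(n) = (+)_(p,r) End_A(n)^p u^r *)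
   (forall n (s : seq (int * nat)) (f : int -> nat -> nop (gV A)),
      uniq s -> (forall pr, pr \in s -> isEnd A n pr.1 (f pr.1 pr.2)) ->
      (forall DS X, htup (CC A) n DS X ->
          \sum_(pr <- s) Phi n (f pr.1 pr.2) pr.2 DS X = 0) ->
      forall pr, pr \in s -> forall ds x, htup A n ds x -> f pr.1 pr.2 ds x = 0)),
   (* compatibility with the unit *)
   (forall DS X, htup (CC A) 1 DS X -> Phi 1 (@eunit k (gV A)) 0 DS X = eunit DS X) /\
   (* compatibility with partial compositions: (f u^r) o_i (g u^s) = (f o_i g) u^(r+s) *)
   (forall (n m : nat) (p q : int) (f g : nop (gV A)) (r s i : nat), (i < n)%N -> isEnd A n p f -> isEnd A m q g ->
      forall DS X, htup (CC A) (n.-1 + m) DS X ->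
        Phi (n.-1 + m) (ecomp i m q f g) (r + s) DS X
        = ecomp i m (q + 2 * (s : int)) (Phi n f r) (Phi m g s) DS X),
   (* equivariance for the symmetric group actions *)
   (forall (n : nat) (p : int) (f : nop (gV A)) (r : nat) (sg : 'S_n), isEnd A n p f ->
      forall DS X, htup (CC A) n DS X ->
        Phi n (eact sg f) r DS X = eact sg (Phi n f r) DS X),
   (* compatibility with the differentials: d(f u^r) = (df) u^r + {Delta,f} u^(r+1) *)
   (forall (n : nat) (p : int) (f : nop (gV A)) (r : nat), isEnd A n p f ->
      forall DS X, htup (CC A) n DS X ->
        Phi n (dEnd A n p f) r DS X + Phi n (DEnd A n p f) r.+1 DS X
        = dEnd (CC A) n (p + 2 * (r : int)) (Phi n f r) DS X) &
   (* compatibility with the operators Delta *)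
   (forall (n : nat) (p : int) (f : nop (gV A)) (r : nat), isEnd A n p f ->
      forall DS X, htup (CC A) n DS X ->
        Phi n (DEnd A n p f) r DS X
        = DEnd (CC A) n (p + 2 * (r : int)) (Phi n f r) DS X)].
Proof.
move=> hA; split.
- split; first by move=> n p f r; exact: (Phi_isEnd hA).
  exact: (Phi_inj hA).
- split; first by move=> DS X _; exact: Phi_unit.
  by move=> n m p q f g r s i ilt hf hg DS X hX; exact: (Phi_ecomp hA r s ilt hf hg hX).
- by move=> n p f r sg _ DS X _; exact: Phi_eact.
- by move=> n p f r hf DS X; exact: (Phi_dEnd hA).
- by move=> n p f r hf DS X; exact: (Phi_DEnd hA).
Qed.
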